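(* Let $p\in(1,\infty)$. A metric space has property HC$_{p,d}$ if and only if it has property HIC$_{p,d}$.
   Context: For infinite $\mathbb M\subseteq\mathbb N$ and $k\in\mathbb N$, $[\mathbb M]^k$ is the set of $\bar n=(n_1,\dots,n_k)\in\mathbb M^k$ with $n_1<\dots<n_k$, with Hamming distance $d_{\mathbb H}(\bar n,\bar m)=|\{j:n_j\ne m_j\}|$; $[\mathbb M]^\omega$ is the set of infinite subsets of $\mathbb M$; $I_k(\mathbb M)=\{(\bar n,\bar m): n_1<m_1<\dots<n_k<m_k\}$; $H_j(\mathbb M)=\{(\bar n,\bar m)\in([\mathbb M]^k)^2: n_i=m_i\ (i\ne j),\ n_j<m_j\}$. For a metric space $(M,d)$, $\lambda>0$ and Lipschitz $f:([\mathbb N]^k,d_{\mathbb H})\to M$, put $\alpha_j=\sup_{(\bar n,\bar m)\in H_j(\mathbb N)}d(f(\bar n),f(\bar m))$. $M$ has $\lambda$-HIC$_{p,d}$ if for every $k$ and every such $f$ there is $\mathbb M\in[\mathbb N]^\omega$ with $d(f(\bar n),f(\bar m))\le\lambda(\sum_{j=1}^k\alpha_j^p)^{1/p}$ for all $(\bar n,\bar m)\in I_k(\mathbb M)$. $M$ has $\lambda$-HC$_{p,d}$ if for every $k$ and every such $f$ there are $\bar n,\bar m\in[\mathbb N]^k$ with $\bar n\cap\bar m=\varnothing$ (as sets) and $d(f(\bar n),f(\bar m))\le\lambda(\sum_{j=1}^k\alpha_j^p)^{1/p}$. HIC$_{p,d}$ (resp. HC$_{p,d}$) means $\lambda$-HIC$_{p,d}$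 (resp. $\lambda$-HC$_{p,d}$) for some $\lambda>0$. *)

From HB Require Import structures.
From mathcomp Require Import all_boot all_order all_algebra.
From mathcomp Require Import boolp classical_sets cardinality reals exp.
Set Implicit Arguments. Unset Strict Implicit. Unset Printing Implicit Defensive.
Import Order.TTheory GRing.Theory Num.Theory.
Local Open Scope classical_set_scope.
Local Open Scope ring_scope.

Definition is_metric (R : realType) (M : Type) (d : M -> M -> R) : Prop :=
  [/\ forall x y, 0 <= d x y,
      forall x y, d x y = 0 <-> x = y,
      forall x y, d x y = d y x &
      forall x y z, d x z <= d x y + d y z].

(* An element nbar = (n_1,...,n_k) of N^k is a k-tuple of naturals
   (index j : 'I_k stands for n_{j+1}). *)

Definition in_seqk (k : nat) (MM : set nat) (n : k.-tuple nat) : Prop :=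
  sorted ltn n /\ forall j : 'I_k, MM (tnth n j).

Definition hamming (k : nat) (n m : k.-tuple nat) : nat :=
  #|[pred j : 'I_k | tnth n j != tnth m j]|.

Definition lipschitz_H (R : realType) (M : Type) (d : M -> M -> R) (k : nat)
  (f : k.-tuple nat -> M) : Prop :=
  exists L : R, forall n m, in_seqk setT n -> in_seqk setT m ->
    d (f n) (f m) <= L * (hamming n m)%:R.

Definition interlaced (k : nat) (MM : set nat) (n m : k.-tuple nat) : Prop :=
  [/\ in_seqk MM n, in_seqk MM m,
      forall j : 'I_k, (tnth n j < tnth m j)%N &
      forall i j : 'I_k, val j = (val i).+1 -> (tnth m i < tnth n j)%N].

Definition H_pair (k : nat) (j : 'I_k) (n m : k.-tuple nat) : Prop :=
  [/\ in_seqk setT n, in_seqk setT m,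
      forall i : 'I_k, i != j -> tnth n i = tnth m i &
      (tnth n j < tnth m j)%N].

Definition alpha (R : realType) (M : Type) (d : M -> M -> R) (k : nat)
  (f : k.-tuple nat -> M) (j : 'I_k) : R :=
  sup [set r : R | exists n m, H_pair j n m /\ r = d (f n) (f m)].

Definition alpha_pnorm (R : realType) (M : Type) (d : M -> M -> R) (p : R)
  (k : nat) (f : k.-tuple nat -> M) : R :=
  (\sum_(j < k) (alpha d f j) `^ p) `^ (p^-1).

Definition lam_HIC (R : realType) (M : Type) (d : M -> M -> R) (p lam : R) : Prop :=
  forall (k : nat) (f : k.-tuple nat -> M), lipschitz_H d f ->
    exists MM : set nat, infinite_set MM /\
      forall n m, interlaced MM n m -> d (f n) (f m) <= lam * alpha_pnorm d p f.

Definition lam_HC (R : realType) (M : Type) (d : M -> M -> R) (p lam : R) : Prop :=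
  forall (k : nat) (f : k.-tuple nat -> M), lipschitz_H d f ->
    exists n m, [/\ in_seqk setT n, in_seqk setT m,
      (forall i j : 'I_k, tnth n i != tnth m j) &
      d (f n) (f m) <= lam * alpha_pnorm d p f].

Definition HIC (R : realType) (M : Type) (d : M -> M -> R) (p : R) : Prop :=
  exists lam : R, 0 < lam /\ lam_HIC d p lam.

Definition HC (R : realType) (M : Type) (d : M -> M -> R) (p : R) : Prop :=
  exists lam : R, 0 < lam /\ lam_HC d p lam.

From HB Require Import structures.
From mathcomp Require Import all_boot all_order all_algebra.
From mathcomp Require Import boolp classical_sets cardinality reals exp.
Import Order.TTheory GRing.Theory Num.Theory.
Set Implicit Arguments. Unset Strict Implicit. Unset Printing Implicit Defensive.

(* HIC => HC, same constant: enumerate the infinite set given by HIC as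
   s_0 < s_1 < ...; the tuples (s_0, s_2, ..., s_{2k-2}) and
   (s_1, s_3, ..., s_{2k-1}) are interlaced and disjoint.

   HC => HIC, constant 2 lam: let A be the alpha-norm of f.  By the infinite
   Ramsey theorem (for colourings of 2k-sets by the finitely many pairs of
   position patterns) there is a subsequence e of N along which the truth of
   d(f a, f b) <= lam A for the subtuples a, b at given positions of a 2k-set
   does not depend on the 2k-set.  Restricting f to e does not increase its
   alpha-norm, so HC for f o e yields disjoint x, y with a good pattern.
   Given interlaced n, m in the sparse subsequence e o spread k, we splice
   two 2k-sets with the pattern of (x, y): the x-positions carry n in one and
   m in the other, while the y-positions carry the same tuple w in both (w is
   placed in the gaps between the windows [n_j, m_j]).  Hence
   d(f n, f m) <= d(f n, f w) + d(f w, f m) <= 2 lam A. *)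

Definition sinc (e : nat -> nat) : Prop := forall i, (e i < e i.+1)%N.

Lemma sinc_lt e : sinc e -> forall i j, (i < j)%N -> (e i < e j)%N.
Proof. by move=> se i j; apply: (homo_ltn ltn_trans se). Qed.

Lemma sinc_ltE e : sinc e -> forall i j, (e i < e j)%N = (i < j)%N.
Proof.
move=> se i j; apply/idP/idP; last exact: sinc_lt.
apply: contraLR; rewrite -!leqNgt leq_eqVlt => /orP[/eqP->//|/(sinc_lt se)].
exact: ltnW.
Qed.

Lemma sinc_inj e : sinc e -> injective e.
Proof.
move=> se i j eij; case: (ltngtP i j) => // ij;
  by move: (sinc_lt se ij); rewrite eij ltnn.
Qed.

Lemma sinc_comp e h : sinc e -> sinc h -> sinc (e \o h).
Proof. by move=> se sh i; rewrite /= (sinc_ltE se). Qed.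

Lemma sorted_map_sinc e (u : seq nat) : sinc e ->
  sorted ltn (map e u) = sorted ltn u.
Proof.
move=> se; rewrite sorted_map; apply/idP/idP; apply: sub_sorted => a b /=;
by rewrite (sinc_ltE se).
Qed.

Lemma lift_seq (e : nat -> nat) (s : seq nat) :
  (forall v, v \in s -> exists j, e j = v) -> exists u, map e u = s.
Proof.
elim: s => [|v s IH] Hs; first by exists [::].
have [j ej] := Hs v (mem_head _ _).
have [u eu] : exists u, map e u = s.
  by apply: IH => w ws; apply: Hs; rewrite inE ws orbT.
by exists (j :: u); rewrite /= ej eu.
Qed.

Lemma infinite_pigeonhole (C : finType) (g : nat -> C) :
  exists c0 h, sinc h /\ forall i, g (h i) = c0.
Proof.
have [c0 Hc0] : exists c0, forall n, exists m, (n < m)%N /\ g m = c0.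
  apply: contrapT => none.
  have bound c : exists n, forall m, (n < m)%N -> g m != c.
    apply: contrapT => Hc; apply: none; exists c => n.
    apply: contrapT => Hn; apply: Hc; exists n => m nm; apply/eqP => gm.
    by apply: Hn; exists m.
  have [N HN] := choice bound.
  have := HN (g (\max_c N c).+1) (\max_c N c).+1.
  by rewrite ltnS leq_bigmax eqxx => /(_ isT).
have [F HF] := choice Hc0.
pose h := fix h i := if i is i'.+1 then F (h i') else F 0%N.
exists c0, h; split; first by move=> i; exact: (HF (h i)).1.
by case=> [|i]; [exact: (HF 0%N).2 | exact: (HF (h i)).2].
Qed.

Section Ramsey.
Variable C : finType.

Definition homogeneous (r : nat) (c : seq nat -> C) (e : nat -> nat) (c0 : C) :=
  sinc e /\ forall s, sorted ltn s -> size s = r -> c (map e s) = c0.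

Section RamseyStep.
Variables (r : nat) (c : seq nat -> C).
Hypothesis ramsey_r : forall c' : seq nat -> C, exists e c0, homogeneous r c' e c0.

Lemma ramsey_thin (e : nat -> nat) : exists hg : (nat -> nat) * C,
  homogeneous r (fun s => c (e 0%N :: map (e \o succn) s)) hg.1 hg.2.
Proof.
have [h [g [sh Hh]]] := ramsey_r (fun s => c (e 0%N :: map (e \o succn) s)).
by exists (h, g).
Qed.

(* Iterating the thinning yields a sequence a together with colours col such
   that every (r+1)-set starting at a t has colour col t. *)
Lemma ramsey_tower : exists (a : nat -> nat) (col : nat -> C), sinc a /\
  forall t s, sorted ltn s -> size s = r -> (forall v, v \in s -> (t < v)%N) ->
    c (a t :: map a s) = col t.
Proof.
have [F HF] := choice ramsey_thin.
pose E t := iter t (fun e => e \o succn \o (F e).1) id.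
have sE t : sinc (E t).
  elim: t => [|t IHt] //=; apply: sinc_comp; last exact: (HF _).1.
  exact: sinc_comp.
(* Later stages of the tower enumerate subsets of earlier ones. *)
have E_range t n i : exists j, E (t.+1 + n)%N i = E t.+1 j.
  by elim: n i => [|n IHn] i; [exists i; rewrite addn0 | rewrite addnS; apply: IHn].
have sa : sinc (fun t => E t 0%N) by move=> t /=; rewrite (sinc_ltE (sE t)).
exists (fun t => E t 0%N), (fun t => (F (E t)).2); split => // t s ss zs gt_t.
have [u eu] : exists u, map (E t.+1) u = map (fun t => E t 0%N) s.
  apply: lift_seq => _ /mapP[v vs ->].
  have [j ej] := E_range t (v - t.+1) 0%N; exists j.
  by rewrite -ej subnKC //; apply: gt_t.
have su : sorted ltn u by rewrite -(sorted_map_sinc _ (sE t.+1)) eu sorted_map_sinc.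
have zu : size u = r by rewrite -(size_map (E t.+1)) eu size_map.
have [_ HE] := HF (E t).
by rewrite -eu -(HE u su zu) /= -map_comp.
Qed.

End RamseyStep.

Theorem ramsey r (c : seq nat -> C) : exists e c0, homogeneous r c e c0.
Proof.
elim: r c => [|r IH] c.
  by exists id, (c [::]); split => // -[|//] _ _.
have [a [col [sa Ha]]] := ramsey_tower c IH.
have [c0 [h [sh Hh]]] := infinite_pigeonhole col.
exists (a \o h), c0; split; first exact: sinc_comp.
case=> [|t s] //= sts [zs].
rewrite -(Hh t) -(Ha (h t) (map h s)) ?size_map -?map_comp //.
- by rewrite sorted_map_sinc //; apply: path_sorted sts.
- move=> _ /mapP[v vs ->]; rewrite (sinc_ltE sh).
  by move: sts; rewrite /= (path_sortedE ltn_trans) => /andP[/allP + _]; apply.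
Qed.

End Ramsey.

Lemma sorted_nth_ltE (s : seq nat) i j : sorted ltn s ->
  (i < size s)%N -> (j < size s)%N -> (nth 0 s i < nth 0 s j)%N = (i < j)%N.
Proof.
move=> ss iz jz; apply/idP/idP; last exact: (sorted_ltn_nth ltn_trans 0 ss).
apply: contraLR; rewrite -!leqNgt leq_eqVlt => /orP[/eqP->//|ji].
exact/ltnW/(sorted_ltn_nth ltn_trans 0 ss).
Qed.

Lemma sort_cat_disjoint (x y : seq nat) : sorted ltn x -> sorted ltn y ->
  (forall v, v \in x -> v \notin y) ->
  [/\ sorted ltn (sort leq (x ++ y)), size (sort leq (x ++ y)) = (size x + size y)%N
    & all (mem (x ++ y)) (sort leq (x ++ y))].
Proof.
move=> sx sy disj; split.
- rewrite ltn_sorted_uniq_leq sort_sorted ?andbT; last exact: leq_total.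
  rewrite sort_uniq cat_uniq.
  move: sx sy; rewrite !ltn_sorted_uniq_leq => /andP[-> _] /andP[-> _] /=.
  by rewrite andbT; apply/hasPn => v vy; apply/negP => /disj; rewrite vy.
- by rewrite size_sort size_cat.
- by apply/allP => v; rewrite mem_sort.
Qed.

Definition windows (k : nat) (lo hi : seq nat) : Prop :=
  [/\ forall j, (j < k)%N -> (nth 0 lo j < nth 0 hi j)%N,
      forall j, (j.+1 < k)%N -> (nth 0 hi j + k < nth 0 lo j.+1)%N
    & (0 < k)%N -> (k < nth 0 lo 0)%N].

(* Given disjoint sorted k-sequences x and y, and a k-sequence z
   with z_j in the j-th window, we build an increasing map on x ++ y sending
   x onto z, and sending y to the gaps between windows in a way that does not
   depend on z: an element v of y lands in the gap just before the window
   numbered by the number of entries of x below v. *)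
Section Splice.
Variables (k : nat) (x y lo hi z : seq nat).
Hypotheses (size_x : size x = k) (size_y : size y = k) (size_z : size z = k).
Hypotheses (sorted_x : sorted ltn x) (sorted_y : sorted ltn y).
Hypothesis disjoint_xy : forall v, v \in x -> v \notin y.
Hypothesis win : windows k lo hi.
Hypothesis z_in_window :
  forall j, (j < k)%N -> (nth 0 lo j <= nth 0 z j <= nth 0 hi j)%N.

Lemma lo_lt_hi j : (j < k)%N -> (nth 0 lo j < nth 0 hi j)%N.
Proof. by case: win => + _ _; apply. Qed.

Lemma hi_lt_lo i j : (i < j)%N -> (j < k)%N -> (nth 0 hi i + k < nth 0 lo j)%N.
Proof.
case: win => _ gap _; elim: j => [//|j IH] ij jk.
move: ij; rewrite ltnS leq_eqVlt => /orP[/eqP->|ij]; first exact: gap.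
apply: ltn_trans (IH ij (ltnW jk)) _; apply: (leq_ltn_trans _ (gap j jk)).
exact: leq_trans (ltnW (lo_lt_hi (ltnW jk))) (leq_addr k _).
Qed.

Lemma lo_gt j : (j < k)%N -> (k < nth 0 lo j)%N.
Proof.
case: win => _ _ gap0; case: j => [|j] jk; first exact: gap0.
by apply: leq_ltn_trans (hi_lt_lo (ltn0Sn j) jk); apply: leq_addl.
Qed.

Lemma lo_mono i j : (i <= j)%N -> (j < k)%N -> (nth 0 lo i <= nth 0 lo j)%N.
Proof.
rewrite leq_eqVlt => /orP[/eqP->//|ij] jk; apply/ltnW.
apply: (ltn_trans _ (hi_lt_lo ij jk)).
exact: leq_trans (lo_lt_hi (ltn_trans ij jk)) (leq_addr k _).
Qed.

Lemma hi_mono i j : (i <= j)%N -> (j < k)%N -> (nth 0 hi i <= nth 0 hi j)%N.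
Proof.
rewrite leq_eqVlt => /orP[/eqP->//|ij] jk; apply/ltnW.
apply: (ltn_trans _ (lo_lt_hi jk)).
exact: leq_ltn_trans (leq_addr k _) (hi_lt_lo ij jk).
Qed.

(* z is strictly increasing, since its entries lie in successive windows. *)
Lemma z_lt i j : (i < j)%N -> (j < k)%N -> (nth 0 z i < nth 0 z j)%N.
Proof.
move=> ij jk; have /andP[_ zi] := z_in_window (ltn_trans ij jk).
have /andP[zj _] := z_in_window jk.
apply: leq_ltn_trans zi _; apply: (leq_trans _ zj).
exact: leq_ltn_trans (leq_addr k _) (hi_lt_lo ij jk).
Qed.

(* The number of entries of x below v. *)
Definition rank (v : nat) : nat := \max_(j < k | (nth 0 x j < v)%N) j.+1.

Lemma rank_gt v j : (j < k)%N -> (nth 0 x j < v)%N -> (j < rank v)%N.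
Proof.
by move=> jk xv; apply: (@leq_bigmax_cond _ _ (fun j : 'I_k => j.+1) (Ordinal jk)).
Qed.

Lemma rank_le v j : (j < k)%N -> (v < nth 0 x j)%N -> (rank v <= j)%N.
Proof.
move=> jk vx; apply/bigmax_leqP => i xi; rewrite ltnNge; apply/negP => ji.
have xij : (nth 0 x j <= nth 0 x i)%N.
  by rewrite leqNgt sorted_nth_ltE ?size_x // -leqNgt.
by have := leq_ltn_trans xij (ltn_trans xi vx); rewrite ltnn.
Qed.

Lemma rank_mono u v : (u <= v)%N -> (rank u <= rank v)%N.
Proof.
move=> uv; apply/bigmax_leqP => i xi.
by apply: (@leq_bigmax_cond _ _ (fun j : 'I_k => j.+1) i); apply: leq_trans uv.
Qed.

Lemma rank_le_k v : (rank v <= k)%N.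
Proof. by apply/bigmax_leqP => i _; exact: ltn_ord. Qed.

(* Start of the gap before window r (the windows are numbered from 0). *)
Definition gap_start (r : nat) : nat := if r is r'.+1 then (nth 0 hi r').+1 else 0.

Definition splice (v : nat) : nat :=
  if v \in x then nth 0 z (index v x) else gap_start (rank v) + index v y.

Lemma splice_x j : (j < k)%N -> splice (nth 0 x j) = nth 0 z j.
Proof.
move=> jk; rewrite /splice mem_nth ?size_x // index_uniq ?size_x //.
by move: sorted_x; rewrite ltn_sorted_uniq_leq => /andP[].
Qed.

Lemma splice_y v : v \in y -> splice v = gap_start (rank v) + index v y.
Proof.
by move=> vy; rewrite /splice; case: ifP => // /disjoint_xy; rewrite vy.
Qed.

Lemma splice_y_gt v r : v \in y -> rank v = r.+1 -> (nth 0 hi r < splice v)%N.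
Proof. by move=> vy rv; rewrite splice_y // rv /= addSn ltnS leq_addr. Qed.

Lemma splice_y_lt v : v \in y -> (rank v < k)%N -> (splice v < nth 0 lo (rank v))%N.
Proof.
move=> vy; have iy : (index v y < k)%N by rewrite -size_y index_mem.
rewrite splice_y //; case: (rank v) => [|r] rk /=.
  by rewrite add0n; apply: ltn_trans iy (lo_gt rk).
case: win => _ gap _; apply: (leq_trans _ (gap r rk)).
by rewrite addSn ltnS ltn_add2l.
Qed.

Lemma splice_mono u v : u \in x ++ y -> v \in x ++ y -> (u < v)%N ->
  (splice u < splice v)%N.
Proof.
have ix w : w \in x -> (index w x < k)%N by rewrite -size_x index_mem.
rewrite !mem_cat => /orP[ux|uy] /orP[vx|vy] uv.
- rewrite -(nth_index 0 ux) -(nth_index 0 vx) in uv *.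
  rewrite !splice_x ?ix //; apply: z_lt (ix _ vx).
  by rewrite -(sorted_nth_ltE sorted_x) ?size_x ?ix.
- rewrite -(nth_index 0 ux) in uv *; rewrite splice_x ?ix //.
  have := rank_gt (ix _ ux) uv; have := rank_le_k v.
  case rv: (rank v) => [//|r] rk; rewrite ltnS => ir.
  apply: (leq_ltn_trans _ (splice_y_gt vy rv)).
  have /andP[_ zh] := z_in_window (ix _ ux); exact: leq_trans zh (hi_mono ir rk).
- rewrite -(nth_index 0 vx) in uv *; rewrite splice_x ?ix //.
  have ru := rank_le (ix _ vx) uv.
  have /andP[lz _] := z_in_window (ix _ vx); apply: (leq_trans _ lz).
  exact: leq_trans (splice_y_lt uy (leq_ltn_trans ru (ix _ vx))) (lo_mono ru (ix _ vx)).
- have := rank_mono (ltnW uv); rewrite leq_eqVlt => /orP[/eqP ruv|ruv].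
    have [iu iv] : (index u y < size y)%N /\ (index v y < size y)%N.
      by rewrite !index_mem.
    by rewrite !splice_y // ruv ltn_add2l -(sorted_nth_ltE sorted_y) // !nth_index.
  have := rank_le_k v; case rv: (rank v) ruv => [//|r]; rewrite ltnS => ruv rk.
  apply: (ltn_trans _ (splice_y_gt vy rv)); apply: (ltn_trans _ (lo_lt_hi rk)).
  exact: leq_trans (splice_y_lt uy (leq_ltn_trans ruv rk)) (lo_mono ruv rk).
Qed.

Lemma splice_sorted S : sorted ltn S -> all (mem (x ++ y)) S ->
  sorted ltn (map splice S).
Proof.
move=> sS aS; rewrite sorted_map.
by apply: (sub_in_sorted _ aS sS) => u v Hu Hv; apply: splice_mono.
Qed.

Lemma map_splice_x : map splice x = z.
Proof.
apply: (@eq_from_nth _ 0); first by rewrite size_map size_x size_z.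
by move=> j; rewrite size_map size_x => jk; rewrite (nth_map 0) ?size_x // splice_x.
Qed.

Lemma map_splice_y : map splice y = map (fun v => gap_start (rank v) + index v y)%N y.
Proof. by apply/eq_in_map => v; apply: splice_y. Qed.

End Splice.

Local Open Scope classical_set_scope.
Local Open Scope ring_scope.

Section Patterns.
Variable k : nat.

(* A pattern is a k-tuple of positions in a 2k-element set; positions are
   taken in 'I_(k + k).+1 so that inord applies. *)
Local Notation pattern := (k.-tuple 'I_(k + k).+1).

Definition subtuple (s : seq nat) (I : pattern) : k.-tuple nat :=
  map_tuple (fun i : 'I_(k + k).+1 => nth 0%N s i) I.

Definition positions (S : seq nat) (w : k.-tuple nat) : pattern :=
  map_tuple (fun v => inord (index v S)) w.

Lemma subtuple_positions (phi : nat -> nat) (S : seq nat) (w : k.-tuple nat) :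
  size S = (k + k)%N -> {subset w <= S} ->
  subtuple (map phi S) (positions S w) = map_tuple phi w.
Proof.
move=> zS wS; apply: val_inj; rewrite /= -map_comp; apply/eq_in_map => v vw /=.
have iS : (index v S < k + k)%N by rewrite -zS index_mem wS.
by rewrite inordK ?(ltn_trans iS) // (nth_map v) ?zS // nth_index // wS.
Qed.

Lemma pattern_ramsey (P : rel (k.-tuple nat)) : exists e, sinc e /\
  forall S T I J, sorted ltn S -> size S = (k + k)%N ->
    sorted ltn T -> size T = (k + k)%N ->
    P (subtuple (map e S) I) (subtuple (map e S) J) =
    P (subtuple (map e T) I) (subtuple (map e T) J).
Proof.
pose col (s : seq nat) : {ffun pattern * pattern -> bool} :=
  [ffun IJ => P (subtuple s IJ.1) (subtuple s IJ.2)].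
have [e [c0 [se He]]] := ramsey (k + k) col.
exists e; split => // S T I J sS zS sT zT.
have := congr1 (fun c : {ffun pattern * pattern -> bool} => c (I, J)) (He S sS zS).
have := congr1 (fun c : {ffun pattern * pattern -> bool} => c (I, J)) (He T sT zT).
by rewrite !ffunE /= => -> ->.
Qed.

End Patterns.

Definition spread (k t : nat) : nat := (k.+1 * t.+1)%N.

Lemma sinc_spread k : sinc (spread k).
Proof. by move=> t; rewrite /spread ltn_pmul2l. Qed.

Lemma spread_gap k a b : (a < b)%N -> (spread k a + k < spread k b)%N.
Proof.
move=> ab; rewrite /spread; apply: (@leq_trans (k.+1 * a.+2)).
  by rewrite [in X in (_ <= X)%N]mulnS addnC addSn.
by rewrite leq_mul2l ltnS ab orbT.
Qed.

Lemma infinite_range (e : nat -> nat) : injective e -> infinite_set (range e).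
Proof.
move=> inj; apply/infiniteP/pcard_leP/injfunPex; exists e.
  by move=> v _; exists v.
by move=> a b _ _; apply: inj.
Qed.

Lemma lift_tuple k (E : nat -> nat) (t : k.-tuple nat) : sinc E ->
  in_seqk (range E) t -> exists u : seq nat,
    [/\ map E u = t, size u = k & sorted ltn u].
Proof.
move=> sE [st rt].
have [u eu] : exists u, map E u = t.
  by apply: lift_seq => v /tnthP [j ->]; have [a _ ea] := rt j; exists a.
exists u; split => //; first by rewrite -(size_map E) eu size_tuple.
by rewrite -(sorted_map_sinc _ sE) eu.
Qed.

Lemma windows_of_interlaced k (e : nat -> nat) (n m : k.-tuple nat) : sinc e ->
  interlaced (range (e \o spread k)) n m ->
  exists lo hi : seq nat,
    [/\ windows k lo hi, size lo = k, size hi = k, map e lo = n & map e hi = m].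
Proof.
move=> se [hn hm nm mn]; have sE := sinc_comp se (sinc_spread k).
have [u [eu zu su]] := lift_tuple sE hn; have [v [ev zv sv]] := lift_tuple sE hm.
have nthE (t : k.-tuple nat) w j (jk : (j < k)%N) :
    map (e \o spread k) w = t -> size w = k ->
    tnth t (Ordinal jk) = e (spread k (nth 0%N w j)).
  by move=> ew zw; rewrite (tnth_nth 0%N) /= -ew (nth_map 0%N) // zw.
exists (map (spread k) u), (map (spread k) v).
rewrite !size_map -!map_comp eu ev; split => //; split.
- move=> j jk; have := nm (Ordinal jk).
  rewrite (nthE _ _ _ _ eu zu) (nthE _ _ _ _ ev zv) (sinc_ltE se).
  by rewrite !(nth_map 0%N) ?zu ?zv.
- move=> j jk; have := mn (Ordinal (ltnW jk)) (Ordinal jk) erefl.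
  rewrite (nthE _ _ _ _ eu zu) (nthE _ _ _ _ ev zv) (sinc_ltE se).
  rewrite (sinc_ltE (sinc_spread k)) !(nth_map 0%N) ?zu ?zv ?(ltnW jk) //.
  exact: spread_gap.
- by move=> k0; rewrite (nth_map 0%N) ?zu // /spread leq_pmulr.
Qed.

Lemma hamming_le k (n m : k.-tuple nat) : (hamming n m <= k)%N.
Proof. by rewrite /hamming; apply: leq_trans (max_card _) _; rewrite card_ord. Qed.

Lemma hamming_map k (e : nat -> nat) (n m : k.-tuple nat) : sinc e ->
  hamming (map_tuple e n) (map_tuple e m) = hamming n m.
Proof.
move=> se; rewrite /hamming; apply: eq_card => j /=.
by rewrite !inE !tnth_map (inj_eq (sinc_inj se)).
Qed.

Lemma in_seqk_map k (e : nat -> nat) (t : k.-tuple nat) : sinc e ->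
  in_seqk setT t -> in_seqk setT (map_tuple e t).
Proof. by move=> se [st _]; split => //; rewrite /= sorted_map_sinc. Qed.

Section Subsequence.
Variables (R : realType) (M : Type) (d : M -> M -> R) (k : nat).
Variables (f : k.-tuple nat -> M) (e : nat -> nat).
Hypotheses (se : sinc e) (Lf : lipschitz_H d f).

Lemma alpha_ge0 (g : k.-tuple nat -> M) j : is_metric d -> 0 <= alpha d g j.
Proof.
case=> d0 _ _ _; rewrite /alpha; set E := [set r | _].
have [hs|hs] := pselect (has_sup E); last by rewrite sup_out.
have [r [n [m [hnm _]]]] := hs.1.
by apply: le_trans (d0 (g n) (g m)) _; apply: (sup_upper_bound hs); exists n, m.
Qed.

Lemma lipschitz_subseq : lipschitz_H d (fun t => f (map_tuple e t)).
Proof.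
have [L HL] := Lf; exists L => n m hn hm.
by rewrite -(hamming_map n m se); apply: HL; apply: in_seqk_map.
Qed.

(* ... and can only decrease each alpha_j, since H_j-pairs of the restriction
   are H_j-pairs of f; the supremum for f is finite as f is Lipschitz. *)
Lemma alpha_subseq_le j : is_metric d ->
  alpha d (fun t => f (map_tuple e t)) j <= alpha d f j.
Proof.
move=> hd; have [L HL] := Lf; rewrite /alpha.
set Eg := [set r | _]; set Ef := [set r | _].
have [hs|hs] := pselect (has_sup Eg); last first.
  by rewrite (sup_out hs); apply: (alpha_ge0 f j hd).
have sub : Eg `<=` Ef.
  move=> r [n [m [[hn hm hnm hj] ->]]]; exists (map_tuple e n), (map_tuple e m).
  split => //; split; try exact: in_seqk_map.
    by move=> i ij; rewrite !tnth_map hnm.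
  by rewrite !tnth_map (sinc_ltE se).
apply: sup_le => //; first by move=> r /sub; apply: le_down.
  exact: hs.1.
split; first by have [r Er] := hs.1; exists r; apply: sub.
exists (`|L| * k%:R) => r [n [m [[hn hm _ _] ->]]].
apply: le_trans (HL n m hn hm) _; apply: (@le_trans _ _ (`|L| * (hamming n m)%:R)).
  by apply: ler_wpM2r => //; apply: ler_norm.
by apply: ler_wpM2l => //; rewrite ler_nat hamming_le.
Qed.

Lemma alpha_pnorm_subseq_le (p : R) : 0 <= p -> is_metric d ->
  alpha_pnorm d p (fun t => f (map_tuple e t)) <= alpha_pnorm d p f.
Proof.
move=> p0 hd; rewrite /alpha_pnorm.
have sum_ge0 g : 0 <= \sum_(j < k) alpha d g j `^ p.
  by apply: sumr_ge0 => j _; apply: powR_ge0.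
apply: ge0_ler_powR; rewrite ?invr_ge0 ?nnegrE ?sum_ge0 //.
apply: ler_sum => j _; apply: ge0_ler_powR; rewrite ?nnegrE ?alpha_ge0 //.
exact: alpha_subseq_le.
Qed.

End Subsequence.

Section HC_HIC.
Variables (R : realType) (p : R) (M : Type) (d : M -> M -> R).
Hypotheses (p_ge0 : 0 <= p) (hd : is_metric d).

Lemma HC_HIC (lam : R) : 0 < lam -> lam_HC d p lam -> lam_HIC d p (lam *+ 2).
Proof.
move=> lam0 HCl k f Lf; set A := alpha_pnorm d p f.
pose good (a b : k.-tuple nat) := d (f a) (f b) <= lam * A.
have [e [se homog]] := pattern_ramsey good.
have [x [y [hx hy xy gxy]]] := HCl k _ (lipschitz_subseq se Lf).
have disj v : v \in (x : seq nat) -> v \notin (y : seq nat).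
  by case/tnthP => i ->; apply/negP => /tnthP[j ij]; move: (xy i j); rewrite ij eqxx.
have [sS zS aS] := sort_cat_disjoint hx.1 hy.1 disj.
set S := sort leq (x ++ y) in sS zS aS.
have {}zS : size S = (k + k)%N by rewrite zS !size_tuple.
have xS : {subset (x : seq nat) <= S} by move=> v vx; rewrite mem_sort mem_cat vx.
have yS : {subset (y : seq nat) <= S} by move=> v vy; rewrite mem_sort mem_cat vy orbT.
(* The pattern of (x, y) in S is good, hence good in every 2k-subset of e. *)
have good_pattern T : sorted ltn T -> size T = (k + k)%N ->
    good (subtuple (map e T) (positions S x)) (subtuple (map e T) (positions S y)).
  move=> sT zT; rewrite (homog T S _ _ sT zT sS zS).
  rewrite (subtuple_positions e zS xS) (subtuple_positions e zS yS).
  apply: le_trans gxy _; apply: ler_wpM2l; first exact: ltW.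
  exact: alpha_pnorm_subseq_le.
exists (range (e \o spread k)); split.
  exact/infinite_range/sinc_inj/sinc_comp/sinc_spread.
move=> n m /(windows_of_interlaced se)[lo [hi [win zlo zhi elo ehi]]].
have [size_x size_y] := (size_tuple x, size_tuple y).
(* Splicing z into the windows: x-positions carry z, y-positions carry w. *)
pose T z := map (splice k x y hi z) S.
have x_part z (t : k.-tuple nat) : size z = k -> map e z = t ->
    subtuple (map e (T z)) (positions S x) = t.
  move=> zz ezt; apply: val_inj; rewrite -map_comp (subtuple_positions _ zS xS) /=.
  by rewrite map_comp (map_splice_x _ _ size_x zz hx.1).
have y_part z z' : subtuple (map e (T z)) (positions S y) =
                   subtuple (map e (T z')) (positions S y).
  rewrite -2!map_comp !(subtuple_positions _ zS yS); apply: val_inj => /=.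
  by rewrite 2!map_comp !(map_splice_y _ _ _ disj).
pose w := subtuple (map e (T lo)) (positions S y).
have good_spliced z (t : k.-tuple nat) : size z = k -> map e z = t ->
    (forall j, (j < k)%N -> (nth 0%N lo j <= nth 0%N z j <= nth 0%N hi j)%N) ->
    good t w.
  move=> zz ezt zin; rewrite -(x_part z t zz ezt) /w (y_part lo z).
  apply: good_pattern; last by rewrite size_map.
  exact: (splice_sorted size_x size_y hx.1 hy.1 disj win zin sS aS).
have g_lo : good n w.
  by apply: good_spliced zlo elo _ => j jk; rewrite leqnn ltnW // (lo_lt_hi win).
have g_hi : good m w.
  by apply: good_spliced zhi ehi _ => j jk; rewrite leqnn andbT ltnW // (lo_lt_hi win).
case: hd => _ _ dsym dtri; apply: le_trans (dtri _ (f w) _) _.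
rewrite mulr2n mulrDl; apply: lerD; first exact: g_lo.
by rewrite dsym; exact: g_hi.
Qed.

End HC_HIC.

Lemma infinite_sinc_enum (A : set nat) : infinite_set A ->
  exists s, sinc s /\ forall i, A (s i).
Proof.
move=> Ainf; have unbounded n : exists m, A m /\ (n < m)%N.
  apply: contra_notP Ainf => none.
  apply: (@sub_finite_set _ _ `I_n.+1); last exact: finite_II.
  move=> m Am; rewrite /= ltnNge; apply/negP => nm; apply: none; by exists m.
have [F HF] := choice unbounded.
pose s := fix s i := if i is i'.+1 then F (s i') else F 0%N.
exists s; split; first by move=> i; exact: (HF (s i)).2.
by case=> [|i]; [exact: (HF 0%N).1 | exact: (HF (s i)).1].
Qed.

Lemma tuple_sortedP k (t : k.-tuple nat) :
  (forall i j : 'I_k, (i < j)%N -> (tnth t i < tnth t j)%N) -> sorted ltn t.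
Proof.
move=> H; rewrite sorted_pairwise; last exact: ltn_trans.
apply/(pairwiseP 0) => i j; rewrite !inE size_tuple => ik jk ij.
by have := H (Ordinal ik) (Ordinal jk) ij; rewrite !(tnth_nth 0).
Qed.

(* HIC implies HC with the same constant: the even- and odd-indexed terms of
   an increasing enumeration s of the set given by HIC are interlaced and
   disjoint. *)
Lemma HIC_HC (R : realType) (p : R) (M : Type) (d : M -> M -> R) (lam : R) :
  lam_HIC d p lam -> lam_HC d p lam.
Proof.
move=> HICl k f Lf; have [MM [MMinf HM]] := HICl k f Lf.
have [s [ss MMs]] := infinite_sinc_enum MMinf.
pose n : k.-tuple nat := [tuple s (val j).*2 | j < k].
pose m : k.-tuple nat := [tuple s (val j).*2.+1 | j < k].
have sn : sorted ltn n.
  by apply: tuple_sortedP => i j ij; rewrite !tnth_mktuple (sinc_ltE ss) ltn_double.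
have sm : sorted ltn m.
  by apply: tuple_sortedP => i j ij; rewrite !tnth_mktuple (sinc_ltE ss) ltnS ltn_double.
have nm : interlaced MM n m.
  split; [by split => // j; rewrite tnth_mktuple | by split => // j; rewrite tnth_mktuple | |].
  - by move=> j; rewrite !tnth_mktuple (sinc_ltE ss).
  - by move=> i j ij; rewrite !tnth_mktuple (sinc_ltE ss) ij doubleS.
exists n, m; split => //; last exact: HM.
move=> i j; rewrite !tnth_mktuple; apply/negP => /eqP /(sinc_inj ss) /(congr1 odd).
by rewrite /= !odd_double.
Qed.

Unset Implicit Arguments.

Theorem mainTheorem4 (R : realType) (p : R) (hp : 1 < p)
  (M : Type) (d : M -> M -> R) (hd : is_metric d) :
  HC d p <-> HIC d p.
Proof.
have p_ge0 : 0 <= p by apply: le_trans (ltW hp).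
split=> [[lam [lam0 HCl]] | [lam [lam0 HICl]]].
- exists (lam *+ 2); split; first by rewrite pmulrn_lgt0.
  exact: (HC_HIC p_ge0 hd).
- by exists lam; split => //; apply: HIC_HC.
Qed.
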